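(* Let $H$ be a finite set of hyperplanes in $\mathbb{R}^d$ in general position with respect to the coordinate frame, meaning that no flat of intersection of hyperplanes of $H$ is parallel to a coordinate axis. For every prism $\sigma$ of the vertical decomposition $\mathrm{VD}(H)$, there is a subset $D\subseteq H$ with $|D|\le 2d$ such that $\sigma$ is a prism of $\mathrm{VD}(D)$. That is, vertical decomposition of hyperplane arrangements has combinatorial dimension $2d$.
   Context: Vertical decomposition $\mathrm{VD}$ of a convex polyhedron $C\subseteq\mathbb{R}^d$ (coordinates $x_1,\dots,x_d$) is defined recursively on $d$. First stage: for a facet $f^+$ on the upper boundary of $C$ (with respect to $x_d$) and a facet $f^-$ on its lower boundary, let $P$ be the intersection of their vertical projections onto $x_d=0$. If $P$ is $(d-1)$-dimensional, the first-stage prism is $\{p\in C:\ \text{the projection of } p \text{ lies in } P\}$. Its ceiling is on the hyperplane of $f^+$ and its floor on that of $f^-$. For unbounded $C$, prisms may have only a floor or only a ceiling. Recursion: $P$ is a convex polyhedron in $\mathbb{R}^{d-1}$, with coordinates $x_1,\dots,x_{d-1}$. It is vertically decomposed recursively in the $x_{d-1}$-direction, and each resulting prism is lifted back into the first-stage prism. Base case: in dimension 1 the polyhedron, an interval, is its own decomposition. $\mathrm{VD}(H)$ is the union of the decompositions of all cells of the arrangement $\mathcal{A}(H)$ of all dimensions. A lower-dimensional cell is decomposed inside its supporting flat, with a generic coordinate choice there. *)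

From HB Require Import structures.
From mathcomp Require Import all_boot all_order all_algebra.
Set Implicit Arguments. Unset Strict Implicit. Unset Printing Implicit Defensive.
Import Order.TTheory GRing.Theory Num.Theory.
Local Open Scope ring_scope.

Section VD.
Variable R : realFieldType.

Definition pt (k : nat) := 'rV[R]_k.

Definition dotv k (a x : pt k) : R := \sum_(i < k) a 0 i * x 0 i.

(* a hyperplane {x | a . x = b} is given by (a, b) with a <> 0 *)
Definition hyp (d : nat) := (pt d * R)%type.
Definition hval d (h : hyp d) (x : pt d) : R := dotv h.1 x - h.2.

Definition full_dim k (S : pt k -> Prop) : Prop :=
  exists (x : pt k) (e : R), 0 < e /\
    forall y : pt k, (forall i, `|y 0 i - x 0 i| < e) -> S y.

Definition proj j (x : pt j.+1) : pt j :=
  \row_(i < j) x 0 (widen_ord (leqnSn j) i).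

Definition im_proj j (S : pt j.+1 -> Prop) : pt j -> Prop :=
  fun y => exists x, S x /\ proj x = y.

(* upper / lower facets of C in R^(j+1) w.r.t. the last coordinate x_(j+1):
   f = C /\ h for a supporting hyperplane h = {a.x = b}, C below (resp. above) h,
   and f is j-dimensional (its vertical projection has nonempty interior). *)
Definition upper_facet j (C f : pt j.+1 -> Prop) : Prop :=
  exists (a : pt j.+1) (b : R), 0 < a 0 ord_max /\
    (forall x, C x -> dotv a x <= b) /\
    (forall x, f x <-> (C x /\ dotv a x = b)) /\
    full_dim (im_proj f).

Definition lower_facet j (C f : pt j.+1 -> Prop) : Prop :=
  exists (a : pt j.+1) (b : R), a 0 ord_max < 0 /\
    (forall x, C x -> dotv a x <= b) /\
    (forall x, f x <-> (C x /\ dotv a x = b)) /\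
    full_dim (im_proj f).

(* the possible bases P of first-stage prisms of C *)
Definition stage_base j (C : pt j.+1 -> Prop) (P : pt j -> Prop) : Prop :=
  (exists fu fl, upper_facet C fu /\ lower_facet C fl /\
     forall y, P y <-> (im_proj fu y /\ im_proj fl y))
  \/ ((~ exists f, upper_facet C f) /\ exists fl, lower_facet C fl /\
        forall y, P y <-> im_proj fl y)
  \/ ((~ exists f, lower_facet C f) /\ exists fu, upper_facet C fu /\
        forall y, P y <-> im_proj fu y)
  \/ ((~ exists f, upper_facet C f) /\ (~ exists f, lower_facet C f) /\
        forall y, P y <-> im_proj C y).

(* vd1 j C s : s is a prism of the vertical decomposition of C in R^(j+1) *)
Fixpoint vd1 (j : nat) : (pt j.+1 -> Prop) -> (pt j.+1 -> Prop) -> Prop :=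
  match j return (pt j.+1 -> Prop) -> (pt j.+1 -> Prop) -> Prop with
  | 0 => fun C s => forall x, s x <-> C x
  | j'.+1 => fun C s =>
      exists (P tau : pt j'.+1 -> Prop),
        stage_base C P /\ full_dim P /\ vd1 P tau /\
        forall x, s x <-> (C x /\ tau (proj x))
  end.

Definition vd (k : nat) : (pt k -> Prop) -> (pt k -> Prop) -> Prop :=
  match k return (pt k -> Prop) -> (pt k -> Prop) -> Prop with
  | 0 => fun C s => forall x, s x <-> C x
  | j.+1 => fun C s => vd1 C s
  end.

(* closure of the cell of the arrangement A(H) containing x0 *)
Definition closed_cell d (H : seq (hyp d)) (x0 x : pt d) : Prop :=
  forall h, h \in H ->
    (hval h x0 = 0 -> hval h x = 0) /\
    (0 < hval h x0 -> 0 <= hval h x) /\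
    (hval h x0 < 0 -> hval h x <= 0).

(* supporting flat (affine hull) of the cell containing x0 *)
Definition supp_flat d (H : seq (hyp d)) (x0 x : pt d) : Prop :=
  forall h, h \in H -> hval h x0 = 0 -> hval h x = 0.

Definition frame_pt d k (o : pt d) (M : 'M[R]_(k, d)) (u : pt k) : pt d :=
  o + u *m M.

(* s is a prism of VD(H), coming from a cell whose supporting flat is the
   image of the frame (o, M), decomposed in the coordinates of that frame *)
Definition prism_via d (H : seq (hyp d)) k (o : pt d) (M : 'M[R]_(k, d))
    (s : pt d -> Prop) : Prop :=
  exists x0 : pt d,
    (forall x, supp_flat H x0 x <-> exists u, x = frame_pt o M u) /\
    exists tau : pt k -> Prop,
      vd (fun u => closed_cell H x0 (frame_pt o M u)) tau /\
      forall x, s x <-> exists u, tau u /\ x = frame_pt o M u.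

Definition flat_of d (H : seq (hyp d)) (G : pt d -> Prop) : Prop :=
  exists S : seq (hyp d), {subset S <= H} /\ S != [::] /\ (exists x, G x) /\
    forall x, G x <-> (forall h, h \in S -> hval h x = 0).

Definition parallel d (G : pt d -> Prop) (v : pt d) : Prop :=
  forall x (t : R), G x -> G (x + t *: v).

Definition gen_pos d (H : seq (hyp d)) : Prop :=
  forall G, flat_of H G -> forall i : 'I_d, ~ parallel G (delta_mx 0 i).

(* a generic coordinate frame inside a flat: the induced arrangement on the
   flat is in general position w.r.t. the frame's axes *)
Definition generic_frame d (H : seq (hyp d)) k (o : pt d) (M : 'M[R]_(k, d))
  : Prop :=
  row_free M /\
  forall G, flat_of H G ->
    (forall x, G x -> exists u, x = frame_pt o M u) ->
    (exists u, ~ G (frame_pt o M u)) ->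
    forall i : 'I_k, ~ parallel G (row i M).

End VD.

From HB Require Import structures.
From mathcomp Require Import all_boot all_order all_algebra.
From mathcomp Require Import ring lra zify.
From Stdlib Require Import Setoid Classical FunctionalExtensionality PropExtensionality.
Import Order.TTheory GRing.Theory Num.Theory.
Local Open Scope ring_scope.
Set Implicit Arguments. Unset Strict Implicit.

(* In frame coordinates the closure of a cell is a polyhedron
   [{x | c x <= 0 for c in L}].  An upper facet of it lies on a single
   constraint of [L]: the one realising the lower envelope of the upward facing
   constraints on an open set; if there is no upper facet, no constraint faces
   upwards.  Likewise for lower facets.  So the base of a first-stage prism is
   again a polyhedron, cut out by the restrictions of the constraints of [L] to
   the hyperplanes of the ceiling and the floor, and a point of the cylinder
   over the base lying between these two hyperplanes satisfies all of [L].  By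
   induction on the dimension, a prism of a cell of dimension [k] stays a prism
   for every subfamily containing at most [2] constraints per level, [2k] in
   all; for [k < d] at most [d - k] further hyperplanes cut out the supporting
   flat of the cell, and [2k + (d - k) <= 2d].  Neither general position nor
   [h.1 != 0] is needed for this count. *)

Lemma preimage_flatten_map (A B : eqType) (F : A -> seq B) (L : seq A) (W : seq B) :
  {subset W <= flatten (map F L)} ->
  exists W0, [/\ {subset W0 <= L}, (size W0 <= size W)%N &
                 {subset W <= flatten (map F W0)}].
Proof.
elim: W => [|w W IH] sub_WL; first by exists [::].
have [|W0 [sub_W0L size_W0 sub_W]] := IH.
  by move=> x xW; apply: sub_WL; rewrite inE xW orbT.
have /flatten_mapP [a aL wFa] := sub_WL w (mem_head _ _).
exists (a :: W0); split=> //.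
- by move=> x; rewrite inE => /predU1P [->|/sub_W0L].
- by move=> x; rewrite inE => /predU1P [->|/sub_W /flatten_mapP [b bW0 xFb]];
    apply/flatten_mapP; [exists a; rewrite ?mem_head|exists b; rewrite // inE bW0 orbT].
Qed.

Lemma sub_flatten_map (A B : eqType) (F : A -> seq B) (L L' : seq A) :
  {subset L <= L'} -> {subset flatten (map F L) <= flatten (map F L')}.
Proof.
by move=> sub x /flatten_mapP [a aL xFa]; apply/flatten_mapP; exists a; rewrite ?sub.
Qed.

Lemma size_seq_of_opt (T : Type) (o : option T) : (size (seq_of_opt o) <= 1)%N.
Proof. by case: o. Qed.

Section Geometry.
Variable R : realFieldType.
Implicit Types (j k : nat).

Lemma pt0_eq (u v : pt R 0) : u = v.
Proof. by apply/rowP => -[]. Qed.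

Lemma set_ext k (P Q : pt R k -> Prop) : (forall y, P y <-> Q y) -> P = Q.
Proof.
by move=> PQ; apply: functional_extensionality => y; apply: propositional_extensionality.
Qed.

Lemma dotvDl k (a b x : pt R k) : dotv (a + b) x = dotv a x + dotv b x.
Proof. by rewrite /dotv -big_split; apply: eq_bigr => i _; rewrite mxE mulrDl. Qed.

Lemma dotvZl k t (a x : pt R k) : dotv (t *: a) x = t * dotv a x.
Proof. by rewrite /dotv mulr_sumr; apply: eq_bigr => i _; rewrite mxE mulrA. Qed.

Lemma dotvNl k (a x : pt R k) : dotv (- a) x = - dotv a x.
Proof. by rewrite -scaleN1r dotvZl mulN1r. Qed.

Lemma dotvDr k (a x y : pt R k) : dotv a (x + y) = dotv a x + dotv a y.
Proof. by rewrite /dotv -big_split; apply: eq_bigr => i _; rewrite mxE mulrDr. Qed.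

Lemma dotvZr k t (a x : pt R k) : dotv a (t *: x) = t * dotv a x.
Proof. by rewrite /dotv mulr_sumr; apply: eq_bigr => i _; rewrite mxE mulrCA. Qed.

Lemma dotvBr k (a x y : pt R k) : dotv a (x - y) = dotv a x - dotv a y.
Proof. by rewrite dotvDr -scaleN1r dotvZr mulN1r. Qed.

Lemma dotv_mulmx d k (a : pt R d) (u : pt R k) (M : 'M[R]_(k, d)) :
  dotv a (u *m M) = dotv (a *m M^T) u.
Proof.
rewrite /dotv; under eq_bigr do rewrite mxE big_distrr.
rewrite exchange_big; apply: eq_bigr => l _; rewrite mxE big_distrl.
by apply: eq_bigr => i _; rewrite !mxE /=; ring.
Qed.

Definition ext j (y : pt R j) (z : R) : pt R j.+1 :=
  \row_(i < j.+1) (if insub (i : nat) is Some i' then y 0 i' else z).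

Lemma proj_ext j (y : pt R j) z : proj (ext y z) = y.
Proof.
apply/rowP => i; rewrite !mxE /=.
by rewrite insubT ?ltn_ord //= => ?; congr (y 0 _); apply: val_inj.
Qed.

Lemma ext_last j (y : pt R j) z : ext y z 0 ord_max = z.
Proof. by rewrite mxE insubN //= ltnn. Qed.

Lemma ext_proj j (x : pt R j.+1) : x = ext (proj x) (x 0 ord_max).
Proof.
apply/rowP => i; rewrite !mxE; case: insubP => [i' _ ei|].
  by rewrite mxE; congr (x 0 _); apply: val_inj; rewrite /= ei.
rewrite -leqNgt => ge_i; congr (x 0 _); apply: val_inj => /=.
by apply/eqP; rewrite eqn_leq ge_i -ltnS ltn_ord.
Qed.

Lemma dotv_ext j (a : pt R j.+1) y z :
  dotv a (ext y z) = dotv (proj a) y + a 0 ord_max * z.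
Proof.
rewrite /dotv big_ord_recr /= ext_last; congr (_ + _).
by apply: eq_bigr => i _; rewrite -[in RHS](proj_ext y z) !mxE.
Qed.

Definition cube k (y0 : pt R k) (e : R) (y : pt R k) : Prop :=
  forall i, `|y 0 i - y0 0 i| < e.

Lemma cube_center k (y0 : pt R k) e : 0 < e -> cube y0 e y0.
Proof. by move=> e_gt0 i; rewrite subrr normr0. Qed.

Lemma cube_half k (y1 y2 : pt R k) e : cube y1 (e / 2) y2 ->
  forall y, cube y2 (e / 2) y -> cube y1 e y.
Proof.
move=> y12 y y2y i; have := y12 i; have := y2y i.
have := ler_distD (y2 0 i) (y 0 i) (y1 0 i); lra.
Qed.

Lemma full_dim_sub k (S S' : pt R k -> Prop) : (forall y, S y -> S' y) ->
  full_dim S -> full_dim S'.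
Proof. by move=> SS' [y [e [e_gt0 cubeS]]]; exists y, e; split=> // z /cubeS /SS'. Qed.

Lemma full_dim_nonempty k (S : pt R k -> Prop) : full_dim S -> exists y, S y.
Proof. by move=> [y [e [e_gt0 cubeS]]]; exists y; apply/cubeS/cube_center. Qed.

Lemma full_dim0 (S : pt R 0 -> Prop) y : S y -> full_dim S.
Proof. by move=> Sy; exists y, 1; split=> // z _; rewrite (pt0_eq z y). Qed.

Definition affine k (g : pt R k -> R) : Prop :=
  exists w kap, forall y, g y = dotv w y + kap.

Lemma affineB k (f g : pt R k -> R) : affine f -> affine g -> affine (fun y => f y - g y).
Proof.
move=> [w1 [k1 f_eq]] [w2 [k2 g_eq]]; exists (w1 - w2), (k1 - k2) => y.
by rewrite f_eq g_eq dotvDl dotvNl; ring.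
Qed.

Lemma affineZ k t (f : pt R k -> R) : affine f -> affine (fun y => t * f y).
Proof.
by move=> [w [kap f_eq]]; exists (t *: w), (t * kap) => y; rewrite f_eq dotvZl; ring.
Qed.

Lemma norm_dotv_le k (w v : pt R k) e : (forall i, `|v 0 i| <= e) ->
  `|dotv w v| <= (\sum_i `|w 0 i|) * e.
Proof.
move=> v_le; rewrite /dotv mulr_suml; apply: le_trans (ler_norm_sum _ _ _) _.
by apply: ler_sum => i _; rewrite normrM ler_wpM2l.
Qed.

Lemma affine_gt0_near k (g : pt R k -> R) y1 : affine g -> 0 < g y1 ->
  exists2 e1, 0 < e1 & forall y, cube y1 e1 y -> 0 < g y.
Proof.
move=> [w [kap g_eq]] g_gt0; set S := \sum_i `|w 0 i|.
have S_ge0 : 0 <= S by apply: sumr_ge0.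
exists (g y1 / (S + 1)) => [|y y_near]; first by rewrite divr_gt0 //; lra.
have : `|dotv w (y - y1)| <= S * (g y1 / (S + 1)).
  by apply: norm_dotv_le => i; rewrite !mxE ltW.
have : S * (g y1 / (S + 1)) < g y1 by rewrite mulrA ltr_pdivrMr; nra.
have -> : g y = g y1 + dotv w (y - y1) by rewrite !g_eq dotvBr; ring.
by rewrite ler_norml => ? /andP [? _]; lra.
Qed.

(* Evaluate [g] on the segment from the centre of the cube to [y]. *)
Lemma affine_eq0 k (g : pt R k -> R) y1 e : affine g -> 0 < e ->
  (forall y, cube y1 e y -> g y = 0) -> forall y, g y = 0.
Proof.
move=> [w [kap g_eq]] e_gt0 g0 y.
set S := \sum_i `|(y - y1) 0 i|.
have S_ge0 : 0 <= S by apply: sumr_ge0.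
set t := e / (S + 1).
have t_gt0 : 0 < t by rewrite divr_gt0 //; lra.
have : g (y1 + t *: (y - y1)) = 0.
  apply: g0 => i; rewrite !mxE addrAC subrr add0r normrM (gtr0_norm t_gt0).
  have : `|(y - y1) 0 i| <= S by rewrite /S (bigD1 i) //= lerDl sumr_ge0.
  rewrite !mxE.
  have : t * (S + 1) = e by rewrite /t mulfVK //; apply: lt0r_neq0; lra.
  nra.
have := g0 _ (cube_center y1 e_gt0).
rewrite !g_eq dotvDr dotvZr dotvBr => g_y1 g_seg.
have /eqP : t * (dotv w y - dotv w y1) = 0 by lra.
by rewrite mulf_eq0 gt_eqF //= subr_eq0 => /eqP; lra.
Qed.

Lemma affine_min_on_cube k (T : eqType) (F : T -> pt R k -> R) (s : seq T) y0 e :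
  (forall t, t \in s -> affine (F t)) -> s != [::] -> 0 < e ->
  exists2 t, t \in s & exists y1 e1, [/\ 0 < e1,
    (forall y, cube y1 e1 y -> cube y0 e y) &
    forall y, cube y1 e1 y -> forall t', t' \in s -> F t y <= F t' y].
Proof.
elim: s => [|t0 s IH] affF s_nnil e_gt0 //.
case: s IH affF {s_nnil} => [|t1 s] IH affF.
  exists t0; rewrite ?mem_head //; exists y0, e; split=> // y _ t'.
  by rewrite inE => /eqP ->.
have [|t ts [y1 [e1 [e1_gt0 cube10 Fmin]]]] := IH _ isT e_gt0.
  by move=> t ts; apply: affF; rewrite inE ts orbT.
have e1h_gt0 : 0 < e1 / 2 by lra.
have cube_sub y : cube y1 (e1 / 2) y -> cube y1 e1 y.
  by move=> y_near i; have := y_near i; lra.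
have [t0_min|] := classic (forall y, cube y1 (e1 / 2) y -> F t0 y <= F t y).
  exists t0; rewrite ?mem_head //; exists y1, (e1 / 2); split=> // [y /cube_sub/cube10 //|].
  move=> y y_near t'; rewrite inE => /predU1P [-> //|t's].
  exact: le_trans (t0_min _ y_near) (Fmin _ (cube_sub _ y_near) _ t's).
move=> /not_all_ex_not [y2 not_min].
have [y2_near /negP] := imply_to_and _ _ not_min; rewrite -ltNge => lt_t_t0.
have [||e2 e2_gt0 Fdiff] := @affine_gt0_near _ (fun y => F t0 y - F t y) y2.
- by apply: affineB; apply: affF; rewrite inE ?eqxx ?ts ?orbT.
- by rewrite subr_gt0.
exists t; first by rewrite inE ts orbT.
have cube_in y : cube y2 (Order.min e2 (e1 / 2)) y -> cube y2 e2 y /\ cube y1 e1 y.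
  move=> y_near; split=> [i|]; first by have := y_near i; rewrite lt_min => /andP [].
  by apply: (cube_half y2_near) => i; have := y_near i; rewrite lt_min => /andP [].
exists y2, (Order.min e2 (e1 / 2)); split; first by rewrite lt_min e2_gt0.
  by move=> y /cube_in [_ /cube10].
move=> y /cube_in [/Fdiff y_t0 y_t] t'; rewrite inE => /predU1P [->|]; first lra.
exact: Fmin.
Qed.

End Geometry.

Section Polyhedra.
Variable R : realFieldType.
Implicit Types (j k : nat).

Definition polyh k (L : seq (hyp R k)) (x : pt R k) : Prop :=
  forall c, c \in L -> hval c x <= 0.

Lemma polyh_sub k (L L' : seq (hyp R k)) x : {subset L <= L'} -> polyh L' x -> polyh L x.
Proof. by move=> sub PL' c /sub /PL'. Qed.

Lemma hval_eq0 k (a : pt R k) b x : hval (a, b) x = 0 <-> dotv a x = b.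
Proof. by rewrite /hval /=; split=> [/eqP|->]; rewrite ?subrr // subr_eq0 => /eqP. Qed.

Definition vcoef j (c : hyp R j.+1) : R := c.1 0 ord_max.

(* The last coordinate of the point of the hyperplane [c] above [y]
   (junk [0] when [c] is vertical). *)
Definition height j (c : hyp R j.+1) (y : pt R j) : R :=
  (c.2 - dotv (proj c.1) y) / vcoef c.

Lemma hval_ext j (c : hyp R j.+1) y z :
  hval c (ext y z) = dotv (proj c.1) y + vcoef c * z - c.2.
Proof. by rewrite /hval dotv_ext. Qed.

Lemma hval_ext_shift j (c : hyp R j.+1) y z z' :
  hval c (ext y z') = hval c (ext y z) + vcoef c * (z' - z).
Proof. by rewrite !hval_ext; ring. Qed.

Lemma hval_ext_height j (c : hyp R j.+1) y z : vcoef c != 0 ->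
  hval c (ext y z) = vcoef c * (z - height c y).
Proof. by move=> c_ne0; rewrite hval_ext /height; field. Qed.

Lemma affine_height j (c : hyp R j.+1) : affine (height c).
Proof.
exists (- (vcoef c)^-1 *: proj c.1), (c.2 / vcoef c) => y.
by rewrite /height dotvZl; ring.
Qed.

Definition restrict j (l c : hyp R j.+1) : hyp R j :=
  (proj c.1 - (vcoef c / vcoef l) *: proj l.1, c.2 - vcoef c * l.2 / vcoef l).

Lemma hval_restrict j (l c : hyp R j.+1) y :
  hval (restrict l c) y = hval c (ext y (height l y)).
Proof. by rewrite hval_ext /hval /restrict /height /= dotvDl dotvNl dotvZl; ring. Qed.

Lemma im_proj_hyperplane j (C : pt R j.+1 -> Prop) (l : hyp R j.+1) y : vcoef l != 0 ->
  im_proj (fun x => C x /\ hval l x = 0) y <-> C (ext y (height l y)).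
Proof.
move=> l_ne0; split=> [[x [[Cx]]]|Cy].
  rewrite (ext_proj x) in Cx *; rewrite hval_ext_height // proj_ext => /eqP.
  by rewrite mulf_eq0 (negbTE l_ne0) subr_eq0 => /eqP e <-; rewrite -e.
by exists (ext y (height l y)); rewrite proj_ext hval_ext_height // subrr mulr0.
Qed.

Lemma polyh_between j (L : seq (hyp R j.+1)) y zl zu z :
  polyh L (ext y zl) -> polyh L (ext y zu) ->
  (forall c, c \in L -> vcoef c < 0 -> zl <= z) ->
  (forall c, c \in L -> 0 < vcoef c -> z <= zu) -> polyh L (ext y z).
Proof.
move=> Pl Pu above below c cL; have := Pl c cL; have := Pu c cL.
rewrite (hval_ext_shift c y zl z) (hval_ext_shift c y zl zu).
case: (ltrgtP (vcoef c) 0) => [neg|pos|->]; last by rewrite !mul0r !addr0.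
- by have := above c cL neg; nra.
- by have := below c cL pos; rewrite (hval_ext_shift c y zu zl); nra.
Qed.

Lemma vertical_im_proj j (L : seq (hyp R j.+1)) y :
  (forall c, c \in L -> vcoef c = 0) ->
  im_proj (polyh L) y <-> polyh L (ext y 0).
Proof.
move=> vert; split=> [[x [Px <-]] c cL|P0]; last by exists (ext y 0); rewrite proj_ext.
by rewrite (hval_ext_shift _ _ (x 0 ord_max)) vert // mul0r addr0 -ext_proj; apply: Px.
Qed.

End Polyhedra.

Section Sides.
Variables (R : realFieldType) (j : nat) (s : R).
Hypothesis s_sq : s * s = 1.
Implicit Types (L : seq (hyp R j.+1)) (C f : pt R j.+1 -> Prop).

(* [s = 1]: upper facets, [s = -1]: lower facets *)
Definition facet C f : Prop :=
  exists (a : pt R j.+1) (b : R), 0 < s * a 0 ord_max /\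
    (forall x, C x -> dotv a x <= b) /\
    (forall x, f x <-> (C x /\ dotv a x = b)) /\
    full_dim (im_proj f).

(* The hyperplane [l] of [L] carries the [s]-facet of [polyh L], or [polyh L]
   has no [s]-facet because it is unbounded in direction [s]. *)
Definition side L (o : option (hyp R j.+1)) : Prop :=
  if o is Some l then
    [/\ l \in L, 0 < s * vcoef l & full_dim (fun y => polyh L (ext y (height l y)))]
  else forall c, c \in L -> s * vcoef c <= 0.

Lemma vcoef_neq0 (c : hyp R j.+1) : 0 < s * vcoef c -> vcoef c != 0.
Proof. by apply: contraTneq => ->; rewrite mulr0 ltxx. Qed.

Lemma hval_ext_height_sign (c : hyp R j.+1) y z : vcoef c != 0 ->
  hval c (ext y z) = (s * vcoef c) * (s * z - s * height c y).
Proof. by move=> c_ne0; rewrite hval_ext_height // -[LHS]mul1r -s_sq; ring. Qed.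

Lemma polyh_move L y z z' : polyh L (ext y z) -> s * z <= s * z' ->
  (forall c, c \in L -> 0 < s * vcoef c -> hval c (ext y z') <= 0) ->
  polyh L (ext y z').
Proof.
move=> Pz zz' up c cL; case: (ltrP 0 (s * vcoef c)) => sc; first exact: up.
have := Pz c cL; rewrite (hval_ext_shift c y z z').
have shift : vcoef c * (z' - z) = (s * vcoef c) * (s * z' - s * z).
  by rewrite -[LHS]mul1r -s_sq; ring.
rewrite shift; nra.
Qed.

Lemma side_subset L o : side L o -> {subset seq_of_opt o <= L}.
Proof.
case: o => [l|] /=; last by move=> _ c; rewrite in_nil.
by case=> lL _ _ c; rewrite inE => /eqP ->.
Qed.

Lemma side_sub L L' o : side L o -> {subset seq_of_opt o <= L'} ->
  {subset L' <= L} -> side L' o.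
Proof.
case: o => [l|] /=; last by move=> neg _ L'L c /L'L; apply: neg.
move=> [_ sl fd] lL' L'L; split=> //; first by apply: lL'; rewrite mem_head.
by apply: full_dim_sub fd => y; apply: polyh_sub.
Qed.

(* The [s]-facing constraint realising the [s]-envelope on a sub-cube caps
   [polyh L] there. *)
Lemma polyh_cap L y0 e (c : hyp R j.+1) : 0 < e ->
  (forall y, cube y0 e y -> exists z, polyh L (ext y z)) ->
  c \in L -> 0 < s * vcoef c ->
  exists2 l, l \in L /\ 0 < s * vcoef l & exists y1 e1, [/\ 0 < e1,
    (forall y, cube y1 e1 y -> cube y0 e y) &
    forall y, cube y1 e1 y -> polyh L (ext y (height l y))].
Proof.
move=> e_gt0 col cL sc; set Ls := [seq m <- L | 0 < s * vcoef m].
have [||l] := affine_min_on_cube (F := fun m y => s * height m y) (s := Ls) y0 _ _ e_gt0.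
- by move=> m _; apply/affineZ/affine_height.
- by apply: contraTneq (_ : c \in Ls) => [->//|]; rewrite mem_filter sc cL.
rewrite mem_filter => /andP [sl lL] [y1 [e1 [e1_gt0 cube10 l_min]]].
exists l => //; exists y1, e1; split=> // y y_near.
have [z Pz] := col _ (cube10 _ y_near).
apply: (polyh_move Pz).
  by have := Pz l lL; rewrite hval_ext_height_sign ?vcoef_neq0 // pmulr_rle0 // subr_le0.
move=> m mL sm; rewrite hval_ext_height_sign ?vcoef_neq0 // pmulr_rle0 // subr_le0.
by apply: l_min; rewrite // mem_filter sm mL.
Qed.

Lemma side_facet L l : side L (Some l) ->
  facet (polyh L) (fun x => polyh L x /\ hval l x = 0).
Proof.
move=> [lL sl fd]; exists l.1, l.2; split=> //; split.
  by move=> x /(_ l lL); rewrite /hval subr_le0.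
split=> [x|]; first by rewrite -hval_eq0 -surjective_pairing.
by apply: full_dim_sub fd => y /im_proj_hyperplane; apply; apply: vcoef_neq0.
Qed.

Lemma facet_side L f : facet (polyh L) f ->
  exists l, side L (Some l) /\ forall y, im_proj f y <-> polyh L (ext y (height l y)).
Proof.
move=> [a [b [sa [L_le [f_eq [y0 [e [e_gt0 cube_f]]]]]]]].
pose ab : hyp R j.+1 := (a, b).
have ab_ne0 : vcoef ab != 0 by apply: vcoef_neq0.
have L_ab x : polyh L x -> hval ab x <= 0 by move=> /L_le; rewrite subr_le0.
have {f_eq}f_def : f = fun x => polyh L x /\ hval ab x = 0.
  apply: set_ext => x; apply: (iff_trans (f_eq x)).
  by split=> -[Px e_x]; split=> //; apply/hval_eq0.
subst f.
have on_f y : cube y0 e y -> polyh L (ext y (height ab y)).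
  by move=> /cube_f /(im_proj_hyperplane _ _ ab_ne0).
have /hasP [c cL sc] : has (fun c => 0 < s * vcoef c) L.
  (* otherwise [polyh L] would contain points above its facet *)
  apply/negPn/negP => /hasPn bounded.
  have P_up : polyh L (ext y0 (height ab y0 + s)).
    apply: (polyh_move (on_f _ (cube_center y0 e_gt0))).
      by rewrite mulrDr lerDl -expr2 sqr_ge0.
    by move=> m /bounded; rewrite ltNge => /negP.
  have step : s * (height ab y0 + s) - s * height ab y0 = 1.
    by rewrite mulrDr s_sq addrAC subrr add0r.
  by have := L_ab _ P_up; rewrite hval_ext_height_sign // step mulr1 leNgt sa.
have col y : cube y0 e y -> exists z, polyh L (ext y z) by exists (height ab y); apply: on_f.
have [l [lL sl] [y1 [e1 [e1_gt0 cube10 on_l]]]] := polyh_cap e_gt0 col cL sc.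
have same_height : forall y, height l y - height ab y = 0.
  apply: (affine_eq0 (affineB (affine_height l) (affine_height ab)) e1_gt0) => y y_near.
  have l_ab := L_ab _ (on_l y y_near).
  have ab_l := on_f y (cube10 y y_near) l lL.
  rewrite !hval_ext_height_sign ?vcoef_neq0 // !pmulr_rle0 // !subr_le0 in l_ab ab_l.
  rewrite -[LHS]mul1r -s_sq -mulrA mulrBr.
  by rewrite (_ : s * height l y - s * height ab y = 0) ?mulr0 //; lra.
exists l; split; first by split=> //; exists y1, e1; split.
move=> y; rewrite im_proj_hyperplane //.
by have /eqP := same_height y; rewrite subr_eq0 => /eqP ->.
Qed.

Lemma side_None_no_facet L : side L None -> ~ exists f, facet (polyh L) f.
Proof.
move=> unbounded [f [a [b [sa [L_le [f_eq /full_dim_nonempty [_ [x [/f_eq [Px ax] _]]]]]]]]].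
have P_up : polyh L (ext (proj x) (x 0 ord_max + s)).
  apply: (polyh_move (z := x 0 ord_max)); first by rewrite -ext_proj.
    by rewrite mulrDr lerDl -expr2 sqr_ge0.
  by move=> c /unbounded; rewrite leNgt => /negP.
have := L_le _ P_up; rewrite dotv_ext -ax [in X in _ <= X](ext_proj x) dotv_ext.
lra.
Qed.

Lemma no_facet_side_None L : full_dim (im_proj (polyh L)) ->
  ~ (exists f, facet (polyh L) f) -> side L None.
Proof.
move=> [y0 [e [e_gt0 cube_L]]] no_facet c cL; rewrite leNgt; apply/negP => sc.
have col y : cube y0 e y -> exists z, polyh L (ext y z).
  by move=> /cube_L [x [Px <-]]; exists (x 0 ord_max); rewrite -ext_proj.
have [l [lL sl] [y1 [e1 [e1_gt0 _ on_l]]]] := polyh_cap e_gt0 col cL sc.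
apply: no_facet; exists (fun x => polyh L x /\ hval l x = 0).
by apply: side_facet; split=> //; exists y1, e1.
Qed.

Lemma side_exists L : full_dim (im_proj (polyh L)) -> exists o, side L o.
Proof.
move=> fd; case: (classic (exists f, facet (polyh L) f)) => [[f]|no_facet].
  by move=> /facet_side [l [side_l _]]; exists (Some l).
by exists None; apply: no_facet_side_None.
Qed.

End Sides.

Lemma upper_facet_iff (R : realFieldType) j (C f : pt R j.+1 -> Prop) :
  upper_facet C f <-> facet 1 C f.
Proof. by split=> -[a [b [sa rest]]]; exists a, b; rewrite mul1r in sa *. Qed.

Lemma lower_facet_iff (R : realFieldType) j (C f : pt R j.+1 -> Prop) :
  lower_facet C f <-> facet (-1) C f.
Proof. by split=> -[a [b [sa rest]]]; exists a, b; rewrite mulN1r oppr_gt0 in sa *. Qed.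

Definition oelse (T : Type) (o o' : option T) : option T :=
  if o is Some _ then o else o'.

Section Decomposition.
Variable R : realFieldType.

Let up_sq : (1 : R) * 1 = 1. Proof. exact: mulr1. Qed.
Let down_sq : (-1 : R) * -1 = 1. Proof. by rewrite mulrNN mulr1. Qed.

Section Stage.
Variable j : nat.
Implicit Types (L : seq (hyp R j.+1)) (o ou ol : option (hyp R j.+1)).

Lemma no_upper_facet L : side 1 L None -> ~ exists f, upper_facet (polyh L) f.
Proof.
by move=> side_u [f /upper_facet_iff f_up]; apply: (side_None_no_facet up_sq side_u); exists f.
Qed.

Lemma no_lower_facet L : side (-1) L None -> ~ exists f, lower_facet (polyh L) f.
Proof.
by move=> side_l [f /lower_facet_iff f_lo]; apply: (side_None_no_facet down_sq side_l); exists f.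
Qed.

Lemma no_upper_facet_side L : full_dim (im_proj (polyh L)) ->
  ~ (exists f, upper_facet (polyh L) f) -> side 1 L None.
Proof.
move=> fd no_up; apply: (no_facet_side_None up_sq fd) => -[f f_up].
by apply: no_up; exists f; apply/upper_facet_iff.
Qed.

Lemma no_lower_facet_side L : full_dim (im_proj (polyh L)) ->
  ~ (exists f, lower_facet (polyh L) f) -> side (-1) L None.
Proof.
move=> fd no_lo; apply: (no_facet_side_None down_sq fd) => -[f f_lo].
by apply: no_lo; exists f; apply/lower_facet_iff.
Qed.

Definition oheight o (y : pt R j) : R := if o is Some l then height l y else 0.

Definition slice o (c : hyp R j.+1) : hyp R j :=
  if o is Some l then restrict l c else (proj c.1, c.2).

Lemma hval_slice o c y : hval (slice o c) y = hval c (ext y (oheight o y)).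
Proof. by case: o => [l|]; [apply: hval_restrict|rewrite hval_ext mulr0 addr0]. Qed.

(* Constraints of the base of the first-stage prism whose ceiling and floor
   lie on [ou] and [ol]; a missing one is replaced by the other, and when both
   are missing [polyh L] is a vertical cylinder, cut by [x_(j+1) = 0]. *)
Definition base_hyps ou ol L : seq (hyp R j) :=
  flatten [seq [:: slice (oelse ou ol) c; slice (oelse ol ou) c] | c <- L].

Lemma polyh_base_hyps ou ol L y : polyh (base_hyps ou ol L) y <->
  polyh L (ext y (oheight (oelse ou ol) y)) /\ polyh L (ext y (oheight (oelse ol ou) y)).
Proof.
split=> [P|[Pu Pl] c' /flatten_mapP [c cL]].
  by split=> c cL; rewrite -hval_slice; apply: P; apply/flatten_mapP;
    exists c; rewrite // !inE eqxx ?orbT.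
by rewrite !inE => /orP [] /eqP ->; rewrite hval_slice; [apply: Pu|apply: Pl].
Qed.

Lemma im_proj_polyh L y z : polyh L (ext y z) -> im_proj (polyh L) y.
Proof. by move=> Pz; exists (ext y z); rewrite proj_ext. Qed.

Lemma sides_None_vertical L c : side 1 L None -> side (-1) L None ->
  c \in L -> vcoef c = 0.
Proof.
by move=> up lo cL; have := up c cL; have := lo c cL; lra.
Qed.

Lemma polyh_of_base_hyps L L' ou ol x : side 1 L ou -> side (-1) L ol ->
  {subset seq_of_opt ou ++ seq_of_opt ol <= L'} -> polyh L' x ->
  polyh (base_hyps ou ol L) (proj x) -> polyh L x.
Proof.
move=> side_u side_l sub P'x /polyh_base_hyps [Pu Pl].
have {sub P'x} in_L' l : l \in seq_of_opt ou ++ seq_of_opt ol ->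
    hval l (ext (proj x) (x 0 ord_max)) <= 0.
  by move=> /sub /P'x; rewrite -ext_proj.
rewrite (ext_proj x); apply: (polyh_between Pl Pu) => c cL sc.
  have [ll ol_ll] : exists ll, ol = Some ll.
    case: ol {Pu Pl in_L'} side_l => [ll|/(_ c cL)]; first by exists ll.
    by rewrite mulN1r oppr_le0 leNgt sc.
  move: side_l in_L'; rewrite ol_ll /= => -[_ sl _] /(_ ll).
  rewrite !(mem_cat, inE) eqxx orbT => /(_ isT); rewrite hval_ext_height ?(vcoef_neq0 sl) //.
  by move: sl; rewrite mulN1r oppr_gt0; nra.
have [lu ou_lu] : exists lu, ou = Some lu.
  case: ou {Pu Pl in_L'} side_u => [lu|/(_ c cL)]; first by exists lu.
  by rewrite mul1r leNgt sc.
move: side_u in_L'; rewrite ou_lu /= => -[_ su _] /(_ lu).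
rewrite !(mem_cat, inE) eqxx => /(_ isT); rewrite hval_ext_height ?(vcoef_neq0 su) //.
by move: su; rewrite mul1r; nra.
Qed.

Lemma stage_base_sides L P : full_dim P -> stage_base (polyh L) P ->
  exists ou ol, [/\ side 1 L ou, side (-1) L ol &
                    forall y, P y <-> polyh (base_hyps ou ol L) y].
Proof.
move=> fdP [[fu [fl [/upper_facet_iff up [/lower_facet_iff lo P_eq]]]]|
           [[no_up [fl [/lower_facet_iff lo P_eq]]]|
           [[no_lo [fu [/upper_facet_iff up P_eq]]]|[no_up [no_lo P_eq]]]]].
- have [lu [side_u fu_eq]] := facet_side up_sq up.
  have [ll [side_l fl_eq]] := facet_side down_sq lo.
  by exists (Some lu), (Some ll); split=> // y; rewrite polyh_base_hyps P_eq fu_eq fl_eq.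
- have [ll [side_l fl_eq]] := facet_side down_sq lo.
  have side_u : side 1 L None.
    apply: no_upper_facet_side no_up.
    by apply: full_dim_sub fdP => y /P_eq /fl_eq /im_proj_polyh.
  by exists None, (Some ll); split=> // y; rewrite polyh_base_hyps P_eq fl_eq /=; tauto.
- have [lu [side_u fu_eq]] := facet_side up_sq up.
  have side_l : side (-1) L None.
    apply: no_lower_facet_side no_lo.
    by apply: full_dim_sub fdP => y /P_eq /fu_eq /im_proj_polyh.
  by exists (Some lu), None; split=> // y; rewrite polyh_base_hyps P_eq fu_eq /=; tauto.
- have fdL : full_dim (im_proj (polyh L)) by apply: full_dim_sub fdP => y /P_eq.
  have side_u := no_upper_facet_side fdL no_up.
  have side_l := no_lower_facet_side fdL no_lo.
  exists None, None; split=> // y; rewrite polyh_base_hyps P_eq /= vertical_im_proj.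
    by tauto.
  by move=> c; apply: sides_None_vertical.
Qed.

Lemma sides_stage_base L ou ol : side 1 L ou -> side (-1) L ol ->
  stage_base (polyh L) (polyh (base_hyps ou ol L)).
Proof.
pose fac l x := polyh L x /\ hval l x = 0.
have fac_proj s l y : side s L (Some l) -> im_proj (fac l) y <-> polyh L (ext y (height l y)).
  by move=> [_ sl _]; apply: im_proj_hyperplane; apply: vcoef_neq0 sl.
case: ou ol => [lu|] [ll|] side_u side_l.
- left; exists (fac lu), (fac ll); split; first exact/upper_facet_iff/side_facet.
  split; first exact/lower_facet_iff/side_facet.
  by move=> y; rewrite polyh_base_hyps (fac_proj _ _ _ side_u) (fac_proj _ _ _ side_l).
- do 2 right; left; split; first exact: no_lower_facet.
  exists (fac lu); split; first exact/upper_facet_iff/side_facet.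
  by move=> y; rewrite polyh_base_hyps (fac_proj _ _ _ side_u) /=; tauto.
- right; left; split; first exact: no_upper_facet.
  exists (fac ll); split; first exact/lower_facet_iff/side_facet.
  by move=> y; rewrite polyh_base_hyps (fac_proj _ _ _ side_l) /=; tauto.
- do 3 right; split; first exact: no_upper_facet.
  split=> [|y]; first exact: no_lower_facet.
  rewrite polyh_base_hyps vertical_im_proj /=; first by tauto.
  by move=> c; apply: sides_None_vertical.
Qed.

End Stage.

Lemma vd1_sub j (C s : pt R j.+1 -> Prop) : vd1 C s -> forall x, s x -> C x.
Proof.
case: j C s => [|j] C s /=; first by move=> s_eq x /s_eq.
by move=> [P [tau [_ [_ [_ s_eq]]]]] x /s_eq [].
Qed.

Lemma polyh_base_hyps0 (L : seq (hyp R 1)) ou ol y : (exists x, polyh L x) ->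
  side 1 L ou -> side (-1) L ol -> polyh (base_hyps ou ol L) y.
Proof.
move=> [x Px] side_u side_l.
have on_side s l : side s L (Some l) -> polyh L (ext y (height l y)).
  by move=> [_ _ /full_dim_nonempty [y' P']]; rewrite (pt0_eq y y').
have on_none : side 1 L None -> side (-1) L None -> polyh L (ext y 0).
  move=> up lo; apply/vertical_im_proj; first by move=> c; apply: sides_None_vertical.
  by exists x; split=> //; apply: pt0_eq.
apply/polyh_base_hyps; case: ou ol side_u side_l => [lu|] [ll|] /= up lo; split;
  first [exact: on_side up | exact: on_side lo | exact: on_none up lo].
Qed.

Lemma polyh_line_support (L : seq (hyp R 1)) : (exists x, polyh L x) ->
  exists W, [/\ {subset W <= L}, (size W <= 2)%N &
    forall L', {subset W <= L'} -> {subset L' <= L} -> forall x, polyh L' x -> polyh L x].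
Proof.
move=> [x1 Px1].
have fdL : full_dim (im_proj (polyh L)) by apply: (full_dim0 (y := proj x1)); exists x1.
have [ou side_u] := side_exists up_sq fdL; have [ol side_l] := side_exists down_sq fdL.
exists (seq_of_opt ou ++ seq_of_opt ol); split.
- by move=> c; rewrite mem_cat => /orP [/(side_subset side_u)|/(side_subset side_l)].
- by rewrite size_cat (leq_add (size_seq_of_opt _) (size_seq_of_opt _)).
move=> L' sub _ x P'x; apply: (polyh_of_base_hyps side_u side_l sub P'x).
by apply: polyh_base_hyps0 => //; exists x1.
Qed.

Lemma vd1_polyh_support j (L : seq (hyp R j.+1)) tau :
  (exists x, polyh L x) -> vd1 (polyh L) tau ->
  exists W, [/\ {subset W <= L}, (size W <= 2 * j.+1)%N &
    forall L', {subset W <= L'} -> {subset L' <= L} -> vd1 (polyh L') tau].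
Proof.
elim: j L tau => [|j IH] L tau L_ne.
  move=> /= tau_eq; have [W [WL W_size W_det]] := polyh_line_support L_ne.
  exists W; split=> // L' WL' L'L x; rewrite tau_eq.
  by split=> [|/(W_det _ WL' L'L) //]; apply: polyh_sub.
move=> /= [P [tau' [base [fdP [vd_tau' tau_eq]]]]].
have [ou [ol [side_u side_l P_eq]]] := stage_base_sides fdP base.
have P_def : P = polyh (base_hyps ou ol L) by apply: set_ext.
subst P.
have [WP [WP_sub WP_size WP_vd]] := IH _ _ (full_dim_nonempty fdP) vd_tau'.
have [W0 [W0_L W0_size WP_W0]] := preimage_flatten_map WP_sub.
exists (seq_of_opt ou ++ seq_of_opt ol ++ W0); split.
- move=> c; rewrite !mem_cat => /or3P [/(side_subset side_u)|/(side_subset side_l)|/W0_L] //.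
- rewrite !size_cat addnA mulnS leq_add ?(leq_trans W0_size) //.
  exact: leq_add (size_seq_of_opt _) (size_seq_of_opt _).
move=> L' sub sub'.
have sub_uo : {subset seq_of_opt ou ++ seq_of_opt ol <= L'}.
  by move=> c cW; apply: sub; rewrite catA mem_cat cW.
have base_mono : {subset base_hyps ou ol L' <= base_hyps ou ol L}.
  exact: sub_flatten_map.
exists (polyh (base_hyps ou ol L')), tau'; split; last split; last split.
- apply: sides_stage_base.
  + by apply: side_sub side_u _ sub' => c cu; apply: sub_uo; rewrite mem_cat cu.
  + by apply: side_sub side_l _ sub' => c cl; apply: sub_uo; rewrite mem_cat cl orbT.
- by apply: full_dim_sub fdP => y; apply: polyh_sub.
- apply: WP_vd => // w /WP_W0; apply: sub_flatten_map => c cW0.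
  by apply: sub; rewrite !mem_cat cW0 !orbT.
move=> x; rewrite tau_eq; split=> [[Px tx]|[P'x tx]]; first by split=> //; apply: polyh_sub Px.
split=> //; apply: (polyh_of_base_hyps side_u side_l sub_uo P'x).
exact: vd1_sub vd_tau' _ tx.
Qed.

End Decomposition.

Section Frame.
Variables (R : realFieldType) (d k : nat) (o : pt R d) (M : 'M[R]_(k, d)) (x0 : pt R d).

Definition orient (h : hyp R d) : R := if hval h x0 < 0 then 1 else -1.

(* [h] in frame coordinates, oriented so that [x0] is on its nonpositive side *)
Definition frame_hyp (h : hyp R d) : hyp R k :=
  (orient h *: (h.1 *m M^T), orient h * (h.2 - dotv h.1 o)).

Lemma hval_frame_hyp h u : hval (frame_hyp h) u = orient h * hval h (frame_pt o M u).
Proof. by rewrite /hval /frame_hyp /frame_pt /= dotvZl dotvDr dotv_mulmx; ring. Qed.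

Definition off_x0 (h : hyp R d) : bool := hval h x0 != 0.

Lemma closed_cell_polyh (G : seq (hyp R d)) u :
  (forall h, h \in G -> hval h x0 = 0 -> hval h (frame_pt o M u) = 0) ->
  closed_cell G x0 (frame_pt o M u) <-> polyh (map frame_hyp (filter off_x0 G)) u.
Proof.
move=> on_flat; split=> [cell c /mapP [h]|P h hG].
  rewrite mem_filter => /andP [h_off hG] ->; rewrite hval_frame_hyp /orient.
  have [_ [pos neg]] := cell h hG; case: ltrP => [/neg|]; first by rewrite mul1r.
  by rewrite le_eqVlt eq_sym (negbTE h_off) /= mulN1r oppr_le0 => /pos.
split=> [|]; first exact: on_flat.
case: (eqVneq (hval h x0) 0) => [->|h_off]; first by split=> ?; lra.
have h_in : h \in filter off_x0 G by rewrite mem_filter [off_x0 h]h_off.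
have := P _ (map_f frame_hyp h_in).
rewrite hval_frame_hyp /orient.
by case: ltrP => hx; rewrite ?mul1r ?mulN1r ?oppr_le0; split=> ?; lra.
Qed.

End Frame.

Section Cells.
Variable R : realFieldType.

Lemma closed_cell_catr d (D1 D2 : seq (hyp R d)) x0 x :
  (forall h, h \in D2 -> hval h x0 = 0 /\ hval h x = 0) ->
  closed_cell (D1 ++ D2) x0 x <-> closed_cell D1 x0 x.
Proof.
move=> D2_0; split=> [cell h hD1|cell h]; first by apply: cell; rewrite mem_cat hD1.
rewrite mem_cat => /orP [/cell //|/D2_0 [-> ->]].
by split=> //; split=> ?; lra.
Qed.

Lemma cell_prism_support d (H : seq (hyp R d)) k (o : pt R d) (M : 'M[R]_(k, d)) x0 tau :
  (forall x, supp_flat H x0 x <-> exists u, x = frame_pt o M u) ->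
  vd (fun u => closed_cell H x0 (frame_pt o M u)) tau ->
  exists D, [/\ {subset D <= H}, (size D <= 2 * k)%N,
    (forall h, h \in D -> hval h x0 != 0) &
    vd (fun u => closed_cell D x0 (frame_pt o M u)) tau].
Proof.
move=> flat_eq vd_tau.
have on_flat G u : {subset G <= H} ->
    forall h, h \in G -> hval h x0 = 0 -> hval h (frame_pt o M u) = 0.
  by move=> GH h /GH hH; apply: (proj2 (flat_eq _)) => //; exists u.
have [u0 x0_eq] := (flat_eq x0).1 (fun h _ => id).
have x0_cell G : closed_cell G x0 x0.
  by move=> h _; split=> //; split=> ?; lra.
case: k M tau flat_eq vd_tau on_flat u0 x0_eq => [|j] M tau _ vd_tau on_flat u0 x0_eq.
  exists [::]; split=> // u; rewrite /= in vd_tau *.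
  by rewrite vd_tau (pt0_eq u u0) -x0_eq; split=> // _; apply: x0_cell.
set L := map (frame_hyp o M x0) (filter (off_x0 x0) H).
have cell_eq G : {subset G <= H} ->
    (fun u => closed_cell G x0 (frame_pt o M u)) =
    polyh (map (frame_hyp o M x0) (filter (off_x0 x0) G)).
  by move=> GH; apply: set_ext => u; apply/closed_cell_polyh/on_flat.
rewrite /= cell_eq // in vd_tau.
have L_ne : exists u, polyh L u by exists u0; rewrite -/L -(cell_eq H) // -x0_eq.
have [W [WL W_size W_vd]] := vd1_polyh_support L_ne vd_tau.
rewrite /L -flatten_map1 in WL.
have [D [D_H D_size W_D]] := preimage_flatten_map WL.
have D_off h : h \in D -> hval h x0 != 0 by move=> /D_H; rewrite mem_filter => /andP [].
have D_sub : {subset D <= H} by move=> h /D_H; rewrite mem_filter => /andP [].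
exists D; split=> //; first exact: leq_trans D_size W_size.
rewrite /= cell_eq // (eq_in_filter (a2 := predT) D_off) filter_predT.
apply: W_vd => [w /W_D|]; first by rewrite flatten_map1.
by move=> _ /mapP [h hD ->]; apply/map_f/D_H.
Qed.

Lemma supp_flat_basis d (H : seq (hyp R d)) k (o : pt R d) (M : 'M[R]_(k, d)) x0 :
  row_free M ->
  (forall x, supp_flat H x0 x <-> exists u, x = frame_pt o M u) ->
  exists D, [/\ {subset D <= H}, (size D <= d - k)%N,
    (forall h, h \in D -> hval h x0 = 0) &
    forall x, (forall h, h \in D -> hval h x = 0) -> supp_flat H x0 x].
Proof.
move=> M_free flat_eq.
set Z := [seq h <- H | hval h x0 == 0].
have Z_H h : h \in Z -> h \in H /\ hval h x0 = 0.
  by rewrite mem_filter => /andP [/eqP -> ->].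
have Z_flat h u : h \in Z -> hval h (frame_pt o M u) = 0.
  by move=> /Z_H [hH h0]; apply: (proj2 (flat_eq _)) => //; exists u.
have hval_diff h x : hval h x0 = 0 -> hval h x = dotv h.1 (x - x0).
  by case: h => a b /hval_eq0 a_x0; rewrite dotvBr a_x0.
pose N : 'M[R]_(size Z, d) := \matrix_(i, l) (nth (0, 0) Z i).1 0 l.
have N_dot (v : pt R d) i : (v *m N^T) 0 i = dotv (nth (0, 0) Z i).1 v.
  by rewrite mxE; apply: eq_bigr => l _; rewrite !mxE mulrC.
have M_N : M *m N^T = 0.
  apply/row_matrixP => i; rewrite row_mul row0; apply/rowP => r; rewrite N_dot mxE.
  have Zr : nth (0, 0) Z r \in Z by apply: mem_nth.
  have := Z_flat _ (delta_mx 0 i) Zr; have := Z_flat _ 0 Zr.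
  by rewrite /frame_pt mul0mx addr0 -rowE /hval dotvDr; lra.
have rank_N : (\rank N <= d - k)%N.
  have := mulmx0_rank_max M_N; rewrite mxrank_tr; move/eqP: M_free => ->; lia.
set f := maxrankfun N.
have /submxP [X N_X] : (N <= rowsub f N)%MS by rewrite eq_maxrowsub submx_refl.
exists [seq nth (0, 0) Z (f i) | i <- enum 'I_(\rank N)]; split.
- by move=> _ /mapP [i _ ->]; apply/(Z_H _ (mem_nth _ _)).1.
- by rewrite size_map size_enum_ord.
- by move=> _ /mapP [i _ ->]; apply/(Z_H _ (mem_nth _ _)).2.
move=> x D0 h hH h0.
have v_f : (x - x0) *m (rowsub f N)^T = 0.
  apply/rowP => r; have Zr := Z_H _ (mem_nth (0, 0) (ltn_ord (f r))).
  rewrite [RHS]mxE -(D0 (nth (0, 0) Z (f r))); last by apply: map_f; rewrite mem_enum.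
  by rewrite hval_diff ?Zr.2 // mxE; apply: eq_bigr => l _; rewrite !mxE mulrC.
have v_N : (x - x0) *m N^T = 0 by rewrite N_X trmx_mul mulmxA v_f mul0mx.
have hZ : h \in Z by rewrite mem_filter h0 eqxx.
have h_lt : (index h Z < size Z)%N by rewrite index_mem.
have := N_dot (x - x0) (Ordinal h_lt); rewrite v_N mxE /= nth_index // => e.
by rewrite hval_diff // -e.
Qed.

End Cells.

Unset Implicit Arguments.
Set Strict Implicit.

Theorem mainTheorem11 (R : realFieldType) (d : nat) (H : seq (hyp R d))
    (Hnz : forall h, h \in H -> h.1 != 0)
    (Hgp : gen_pos H) :
  (* prisms of full-dimensional cells (standard coordinates) *)
  (forall s : pt R d -> Prop,
     prism_via H 0 (1%:M : 'M[R]_d) s ->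
     exists D : seq (hyp R d),
       {subset D <= H} /\ (size D <= 2 * d)%N /\
       prism_via D 0 (1%:M : 'M[R]_d) s) /\
  (* prisms of lower-dimensional cells (generic frame in the supporting flat) *)
  (forall (k : nat) (o : pt R d) (M : 'M[R]_(k, d)),
     (k < d)%N -> generic_frame H o M ->
     forall s : pt R d -> Prop,
       prism_via H o M s ->
       exists D : seq (hyp R d),
         {subset D <= H} /\ (size D <= 2 * d)%N /\ prism_via D o M s).
Proof.
split=> [s [x0 [flat_eq [tau [vd_tau s_eq]]]]|
         k o M lt_kd [M_free _] s [x0 [flat_eq [tau [vd_tau s_eq]]]]].
  have [D [DH D_size D_off vd_D]] := cell_prism_support flat_eq vd_tau.
  exists D; split=> //; split=> //; exists x0; split; last by exists tau.
  move=> x; split=> [_|_ h hD h0]; first by exists x; rewrite /frame_pt mulmx1 add0r.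
  by have := D_off h hD; rewrite h0 eqxx.
have [D1 [D1H D1_size D1_off vd_D1]] := cell_prism_support flat_eq vd_tau.
have [D2 [D2H D2_size D2_on D2_flat]] := supp_flat_basis M_free flat_eq.
exists (D1 ++ D2); split; first by move=> h; rewrite mem_cat => /orP [/D1H|/D2H].
split; first by rewrite size_cat (leq_trans (leq_add D1_size D2_size)) //; lia.
have flat12 x : supp_flat (D1 ++ D2) x0 x <-> supp_flat H x0 x.
  split=> [on12|onH h]; first by apply: D2_flat => h hD2; apply: on12 (D2_on _ hD2);
    rewrite mem_cat hD2 orbT.
  by rewrite mem_cat => /orP [/D1H|/D2H]; apply: onH.
exists x0; split=> [x|]; first by rewrite flat12.
exists tau; split=> //.
suff -> : (fun u => closed_cell (D1 ++ D2) x0 (frame_pt o M u)) =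
          (fun u => closed_cell D1 x0 (frame_pt o M u)) by [].
apply: set_ext => u; apply: closed_cell_catr => h hD2; split; first exact: D2_on.
by apply: (proj2 (flat_eq _)); [exists u | apply: D2H | apply: D2_on].
Qed.
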